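(* Let $H^0(\mathcal A_\theta^{alg},{}_{\omega}\mathcal A_\theta^{alg\ast})$ be the space of formal series $\varphi=\sum\varphi_{n,m}U_1^nU_2^m$ with $(\omega\cdot a)\varphi=\varphi a$ for all $a\in\mathcal A_\theta^{alg}$, and let $\mathbb Z_3=\langle\omega\rangle$ act on it by applying $\omega$ termwise. Then the subspace of $\mathbb Z_3$-invariant elements satisfies $H^0(\mathcal A_\theta^{alg},{}_{\omega}\mathcal A_\theta^{alg\ast})^{\mathbb Z_3}\cong\mathbb C^3$.
   Context: Let $\theta\in\mathbb R\setminus\mathbb Q$, $\lambda=e^{2\pi i\theta}$, $\lambda^s:=e^{2\pi i\theta s}$. $\mathcal A_\theta^{alg}$ is the complex algebra of finite sums $\sum a_{n,m}U_1^nU_2^m$ with $U_1,U_2$ invertible and $U_2U_1=\lambda U_1U_2$; formal series $\sum_{(n,m)\in\mathbb Z^2}\varphi_{n,m}U_1^nU_2^m$ with arbitrary coefficients form an $\mathcal A_\theta^{alg}$-bimodule via multiplication. $\omega$ is the automorphism with $\omega\cdot U_1=U_2^{-1}$, $\omega\cdot U_2=\lambda^{-1/2}U_1U_2^{-1}$; it has order $3$. Termwise action: $\omega\cdot\sum\varphi_{n,m}U_1^nU_2^m=\sum\varphi_{n,m}\,\omega\cdot(U_1^nU_2^m)$, which is again a formal series. *)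

From Stdlib Require Import Reals ZArith List.
From Coquelicot Require Import Coquelicot.

Definition lam_pow (theta s : R) : C :=
  (cos (2 * PI * theta * s), sin (2 * PI * theta * s)).

(* A monomial  c * U1^a * U2^b  is represented by (c, (a, b)). *)
Definition Mon := (C * (Z * Z))%type.

Definition mon_one : Mon := (RtoC 1, (0%Z, 0%Z)).

(* Product in A_theta, using U2^b U1^a' = lambda^(b a') U1^a' U2^b. *)
Definition mmul (theta : R) (x y : Mon) : Mon :=
  match x, y with
  | (c, (a, b)), (d, (a', b')) =>
      (Cmult (Cmult c d) (lam_pow theta (IZR (b * a'))), ((a + a')%Z, (b + b')%Z))
  end.

Definition minv (theta : R) (x : Mon) : Mon :=
  match x with
  | (c, (a, b)) => (Cmult (Cinv c) (lam_pow theta (IZR (a * b))), ((- a)%Z, (- b)%Z))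
  end.

Definition mpow (theta : R) (x : Mon) (n : Z) : Mon :=
  match n with
  | Z0 => mon_one
  | Zpos p => Nat.iter (Pos.to_nat p) (mmul theta x) mon_one
  | Zneg p => Nat.iter (Pos.to_nat p) (mmul theta (minv theta x)) mon_one
  end.

Definition omega_U1 : Mon := (RtoC 1, (0%Z, (-1)%Z)).
Definition omega_U2 (theta : R) : Mon := (lam_pow theta (-1/2), (1%Z, (-1)%Z)).

Definition omega_mon (theta : R) (n m : Z) : Mon :=
  mmul theta (mpow theta omega_U1 n) (mpow theta (omega_U2 theta) m).

Definition omega_monc (theta : R) (x : Mon) : Mon :=
  match x with
  | (c, (a, b)) => let '(d, e) := omega_mon theta a b in (Cmult c d, e)
  end.

(* Elements of A_theta^alg: finite sums of monomials. *)
Definition Alg := list Mon.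

Definition omega_alg (theta : R) (a : Alg) : Alg := map (omega_monc theta) a.

(* Formal series  sum phi(n,m) U1^n U2^m  with arbitrary coefficients. *)
Definition FSeries := (Z -> Z -> C).

Definition series_zero : FSeries := fun _ _ => RtoC 0.
Definition series_add (f g : FSeries) : FSeries := fun p q => Cplus (f p q) (g p q).

Definition lmul_mon (theta : R) (x : Mon) (phi : FSeries) : FSeries :=
  fun p q => match x with
  | (_, (a, b)) => Cmult (fst (mmul theta x (RtoC 1, ((p - a)%Z, (q - b)%Z))))
                         (phi (p - a)%Z (q - b)%Z)
  end.

Definition rmul_mon (theta : R) (phi : FSeries) (x : Mon) : FSeries :=
  fun p q => match x with
  | (_, (a, b)) => Cmult (fst (mmul theta (RtoC 1, ((p - a)%Z, (q - b)%Z)) x))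
                         (phi (p - a)%Z (q - b)%Z)
  end.

Definition lmul (theta : R) (a : Alg) (phi : FSeries) : FSeries :=
  fold_right (fun x acc => series_add (lmul_mon theta x phi) acc) series_zero a.

Definition rmul (theta : R) (phi : FSeries) (a : Alg) : FSeries :=
  fold_right (fun x acc => series_add (rmul_mon theta phi x) acc) series_zero a.

Definition H0_omega (theta : R) (phi : FSeries) : Prop :=
  forall a : Alg, lmul theta (omega_alg theta a) phi = rmul theta phi a.

(* Termwise action of omega on a formal series.  omega.(U1^n U2^m) has exponents
   (m, -n-m); the unique monomial landing on (p,q) is (n,m) = (-p-q, p). *)
Definition omega_series (theta : R) (phi : FSeries) : FSeries :=
  fun p q => Cmult (fst (omega_mon theta (- p - q)%Z p)) (phi (- p - q)%Z p).

Definition Z3_invariant (theta : R) (phi : FSeries) : Prop :=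
  forall k : nat, Nat.iter k (omega_series theta) phi = phi.

Definition irrational (theta : R) : Prop :=
  forall p q : Z, q <> 0%Z -> theta <> IZR p / IZR q.

(** Multiplying coefficients by the gauge [lambda^(-(p^2 + 4pq + q^2)/6)] turns the
    twisted-trace condition [(omega . a) phi = phi a] into invariance of the gauged
    coefficients under all shifts [(s, t)] of the lattice [s = t mod 3].  A twisted
    trace is therefore determined by three numbers, one per class of [p - q] mod 3,
    and every such series is fixed by [omega], because the gauge phase is. *)
From Stdlib Require Import Reals ZArith List Lra Lia FunctionalExtensionality.
From Coquelicot Require Import Coquelicot.

Lemma lam_pow_add th s t : Cmult (lam_pow th s) (lam_pow th t) = lam_pow th (s + t).
Proof.
  unfold lam_pow, Cmult; simpl.
  replace (2 * PI * th * (s + t)) with (2 * PI * th * s + 2 * PI * th * t) by ring.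
  rewrite cos_plus, sin_plus. f_equal; ring.
Qed.

Lemma lam_pow_eq th s t : s = t -> lam_pow th s = lam_pow th t.
Proof. now intros ->. Qed.

Lemma lam_pow_0 th : lam_pow th 0 = RtoC 1.
Proof. unfold lam_pow, RtoC. now rewrite Rmult_0_r, cos_0, sin_0. Qed.

Lemma Cinv_lam_pow th s : Cinv (lam_pow th s) = lam_pow th (- s).
Proof.
  unfold lam_pow, Cinv; simpl.
  replace (2 * PI * th * - s) with (- (2 * PI * th * s)) by ring.
  rewrite cos_neg, sin_neg.
  assert (H := sin2_cos2 (2 * PI * th * s)). unfold Rsqr in H.
  replace (cos (2 * PI * th * s) * (cos (2 * PI * th * s) * 1) +
           sin (2 * PI * th * s) * (sin (2 * PI * th * s) * 1)) with 1 by lra.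
  f_equal; field.
Qed.

Lemma lam_pow_mul_reg_l th s u v :
  Cmult (lam_pow th s) u = Cmult (lam_pow th s) v -> u = v.
Proof.
  intros H.
  assert (Hinv : Cmult (lam_pow th (- s)) (lam_pow th s) = RtoC 1).
  { rewrite lam_pow_add, <- (lam_pow_0 th). apply lam_pow_eq. ring. }
  transitivity (Cmult (lam_pow th (- s)) (Cmult (lam_pow th s) u)).
  { rewrite Cmult_assoc, Hinv. ring. }
  rewrite H, Cmult_assoc, Hinv. ring.
Qed.

Lemma iter_mmul_lam_pow th s a b k :
  Nat.iter k (mmul th (lam_pow th s, (a, b))) mon_one =
  (lam_pow th (INR k * s + IZR a * IZR b * INR k * (INR k - 1) / 2),
   ((Z.of_nat k * a)%Z, (Z.of_nat k * b)%Z)).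
Proof.
  induction k as [|k IH]; simpl Nat.iter.
  - unfold mon_one. rewrite <- (lam_pow_0 th). f_equal. apply lam_pow_eq. simpl. field.
  - rewrite IH. unfold mmul. f_equal; [|f_equal; lia].
    rewrite Cmult_comm, Cmult_assoc, !lam_pow_add. apply lam_pow_eq.
    rewrite mult_IZR, mult_IZR, INR_IZR_INZ, S_INR, INR_IZR_INZ. field.
Qed.

Lemma minv_lam_pow th s a b :
  minv th (lam_pow th s, (a, b)) =
  (lam_pow th (- s + IZR a * IZR b), ((- a)%Z, (- b)%Z)).
Proof.
  unfold minv. rewrite Cinv_lam_pow, lam_pow_add, mult_IZR. reflexivity.
Qed.

Lemma mpow_lam_pow th s a b n :
  mpow th (lam_pow th s, (a, b)) n =
  (lam_pow th (IZR n * s + IZR a * IZR b * IZR n * (IZR n - 1) / 2),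
   ((n * a)%Z, (n * b)%Z)).
Proof.
  destruct n as [|p|p]; unfold mpow.
  - unfold mon_one. rewrite <- (lam_pow_0 th). f_equal. apply lam_pow_eq. simpl. field.
  - rewrite iter_mmul_lam_pow, INR_IZR_INZ, positive_nat_Z. reflexivity.
  - rewrite minv_lam_pow, iter_mmul_lam_pow, INR_IZR_INZ, positive_nat_Z.
    f_equal; [|f_equal; lia].
    apply lam_pow_eq. rewrite <- Pos2Z.opp_pos, !opp_IZR. field.
Qed.

Lemma omega_mon_closed_form th n m :
  omega_mon th n m =
  (lam_pow th (- (IZR m * IZR m) / 2 - IZR n * IZR m), (m, (- n - m)%Z)).
Proof.
  unfold omega_mon, omega_U1, omega_U2. rewrite <- (lam_pow_0 th), !mpow_lam_pow.
  unfold mmul. f_equal; [|f_equal; lia].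
  rewrite !lam_pow_add. apply lam_pow_eq. rewrite !mult_IZR. simpl IZR. field.
Qed.

Definition trace_phase (p q : Z) : R :=
  (IZR p * IZR p + 4 * IZR p * IZR q + IZR q * IZR q) / 6.

Definition untwist (th : R) (phi : FSeries) (p q : Z) : C :=
  Cmult (phi p q) (lam_pow th (- trace_phase p q)).

Definition twisted_trace (th : R) (h : Z -> C) : FSeries :=
  fun p q => Cmult (h ((p - q) mod 3)%Z) (lam_pow th (trace_phase p q)).

Lemma twist_untwist th phi p q :
  phi p q = Cmult (untwist th phi p q) (lam_pow th (trace_phase p q)).
Proof.
  unfold untwist. rewrite <- Cmult_assoc, lam_pow_add.
  rewrite (lam_pow_eq th (- trace_phase p q + trace_phase p q) 0) by ring.
  rewrite lam_pow_0. ring.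
Qed.

Lemma untwist_twisted_trace th h p q :
  untwist th (twisted_trace th h) p q = h ((p - q) mod 3)%Z.
Proof.
  unfold untwist, twisted_trace. rewrite <- Cmult_assoc, lam_pow_add.
  rewrite (lam_pow_eq th (trace_phase p q + - trace_phase p q) 0) by ring.
  rewrite lam_pow_0. ring.
Qed.

Definition mon_action_phase (a b p q : Z) : R :=
  IZR ((q - b) * a) + trace_phase (p - a) (q - b).

Lemma rmul_mon_untwist th phi c a b p q :
  rmul_mon th phi (c, (a, b)) p q =
  Cmult (Cmult c (lam_pow th (mon_action_phase a b p q))) (untwist th phi (p - a) (q - b)).
Proof.
  unfold rmul_mon, mmul, mon_action_phase; cbn [fst snd].
  rewrite (twist_untwist th phi), <- lam_pow_add. ring.
Qed.

Lemma lmul_omega_mon_untwist th phi c a b p q :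
  lmul_mon th (omega_monc th (c, (a, b))) phi p q =
  Cmult (Cmult c (lam_pow th (mon_action_phase a b p q)))
        (untwist th phi (p - b) (q + a + b)).
Proof.
  unfold omega_monc. rewrite omega_mon_closed_form.
  unfold lmul_mon, mmul; cbn [fst snd].
  replace (q - (- a - b))%Z with (q + a + b)%Z by ring.
  rewrite (twist_untwist th phi).
  transitivity (Cmult (Cmult c (untwist th phi (p - b) (q + a + b)))
    (lam_pow th (- (IZR b * IZR b) / 2 - IZR a * IZR b + IZR ((- a - b) * (p - b))
                 + trace_phase (p - b) (q + a + b)))).
  { rewrite <- !lam_pow_add. ring. }
  rewrite (lam_pow_eq th _ (mon_action_phase a b p q)); [ring|].
  unfold mon_action_phase, trace_phase.
  rewrite !mult_IZR, !minus_IZR, !plus_IZR, !opp_IZR. field.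
Qed.

Lemma H0_omega_twisted_trace th h : H0_omega th (twisted_trace th h).
Proof.
  intro l. induction l as [|[c [a b]] l IH]; [reflexivity|].
  unfold lmul, rmul, omega_alg in *. cbn [map fold_right].
  rewrite IH. f_equal.
  extensionality p; extensionality q.
  rewrite lmul_omega_mon_untwist, rmul_mon_untwist, !untwist_twisted_trace.
  replace (p - b - (q + a + b))%Z with (p - a - (q - b) + (- b) * 3)%Z by ring.
  now rewrite Z.mod_add by lia.
Qed.

Lemma omega_series_twisted_trace th h :
  omega_series th (twisted_trace th h) = twisted_trace th h.
Proof.
  extensionality p; extensionality q.
  unfold omega_series, twisted_trace. rewrite omega_mon_closed_form; cbn [fst].
  replace (- p - q - p)%Z with (p - q + (- p) * 3)%Z by ring.
  rewrite Z.mod_add by lia.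
  transitivity (Cmult (h ((p - q) mod 3)%Z)
    (lam_pow th (- (IZR p * IZR p) / 2 - IZR (- p - q) * IZR p + trace_phase (- p - q) p))).
  { rewrite <- lam_pow_add. ring. }
  f_equal. apply lam_pow_eq. unfold trace_phase. rewrite !minus_IZR, !opp_IZR. field.
Qed.

Lemma Z3_invariant_twisted_trace th h : Z3_invariant th (twisted_trace th h).
Proof.
  intro k. induction k as [|k IH]; [reflexivity|].
  rewrite Nat.iter_succ, IH. apply omega_series_twisted_trace.
Qed.

Lemma H0_omega_mon th phi x :
  H0_omega th phi -> lmul_mon th (omega_monc th x) phi = rmul_mon th phi x.
Proof.
  intros H. specialize (H (x :: nil)).
  unfold lmul, rmul, omega_alg in H; simpl in H.
  extensionality p; extensionality q.
  apply (f_equal (fun f => f p q)) in H. unfold series_add, series_zero in H.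
  now rewrite !Cplus_0_r in H.
Qed.

Lemma H0_omega_untwist_shift th phi x y s b :
  H0_omega th phi -> untwist th phi (x + s) (y + s + 3 * b) = untwist th phi x y.
Proof.
  intros H.
  assert (Hmon := H0_omega_mon th phi (RtoC 1, ((s + b)%Z, b)) H).
  apply (f_equal (fun f => f (x + s + b)%Z (y + b)%Z)) in Hmon.
  rewrite lmul_omega_mon_untwist, rmul_mon_untwist, !Cmult_1_l in Hmon.
  apply lam_pow_mul_reg_l in Hmon.
  replace (x + s + b - b)%Z with (x + s)%Z in Hmon by ring.
  replace (y + b + (s + b) + b)%Z with (y + s + 3 * b)%Z in Hmon by ring.
  replace (x + s + b - (s + b))%Z with x in Hmon by ring.
  replace (y + b - b)%Z with y in Hmon by ring.
  exact Hmon.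
Qed.

Lemma H0_omega_twisted_trace_eq th phi :
  H0_omega th phi -> phi = twisted_trace th (fun r => untwist th phi r 0).
Proof.
  intros H. extensionality p; extensionality q.
  unfold twisted_trace. rewrite (twist_untwist th phi p q). f_equal.
  assert (Hdiv := Z_div_mod_eq_full (p - q) 3).
  rewrite <- (H0_omega_untwist_shift th phi p q ((p - q) mod 3 - p) ((p - q) / 3) H).
  f_equal; lia.
Qed.

Lemma twisted_trace_ext th h h' :
  (forall r, (0 <= r < 3)%Z -> h r = h' r) -> twisted_trace th h = twisted_trace th h'.
Proof.
  intros H. extensionality p; extensionality q. unfold twisted_trace.
  rewrite H; [reflexivity|]. apply Z.mod_pos_bound. lia.
Qed.

Lemma twisted_trace_inj th h h' :
  twisted_trace th h = twisted_trace th h' -> forall r, (0 <= r < 3)%Z -> h r = h' r.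
Proof.
  intros H r Hr.
  apply (f_equal (fun phi => untwist th phi r 0%Z)) in H.
  rewrite !untwist_twisted_trace, Z.sub_0_r, Z.mod_small in H; assumption.
Qed.

Definition residue_indicator (i k : Z) : C := if Z.eqb k i then RtoC 1 else RtoC 0.

Lemma twisted_trace_combination th (c : C * C * C) :
  (fun n m =>
     Cplus (Cplus (Cmult (fst (fst c)) (twisted_trace th (residue_indicator 0) n m))
                  (Cmult (snd (fst c)) (twisted_trace th (residue_indicator 1) n m)))
           (Cmult (snd c) (twisted_trace th (residue_indicator 2) n m))) =
  twisted_trace th (fun k =>
     Cplus (Cplus (Cmult (fst (fst c)) (residue_indicator 0 k))
                  (Cmult (snd (fst c)) (residue_indicator 1 k)))
           (Cmult (snd c) (residue_indicator 2 k))).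
Proof.
  extensionality n; extensionality m. unfold twisted_trace. ring.
Qed.

Theorem mainTheorem4 (theta : R) (Htheta : irrational theta) :
  exists b1 b2 b3 : FSeries,
    (H0_omega theta b1 /\ Z3_invariant theta b1) /\
    (H0_omega theta b2 /\ Z3_invariant theta b2) /\
    (H0_omega theta b3 /\ Z3_invariant theta b3) /\
    forall phi : FSeries,
      (H0_omega theta phi /\ Z3_invariant theta phi) <->
      exists! c : C * C * C,
        phi = fun n m =>
          Cplus (Cplus (Cmult (fst (fst c)) (b1 n m)) (Cmult (snd (fst c)) (b2 n m)))
                (Cmult (snd c) (b3 n m)).
Proof.
  exists (twisted_trace theta (residue_indicator 0)),
         (twisted_trace theta (residue_indicator 1)),
         (twisted_trace theta (residue_indicator 2)).
  do 3 (split; [split; [apply H0_omega_twisted_trace | apply Z3_invariant_twisted_trace]|]).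
  intro phi. split.
  - intros [Hphi _].
    exists (untwist theta phi 0 0, untwist theta phi 1 0, untwist theta phi 2 0). split.
    + rewrite twisted_trace_combination, (H0_omega_twisted_trace_eq theta phi Hphi) at 1.
      apply twisted_trace_ext. intros r Hr.
      assert (Hcases : (r = 0 \/ r = 1 \/ r = 2)%Z) by lia.
      destruct Hcases as [-> | [-> | ->]]; unfold residue_indicator; simpl; ring.
    + intros [[x1 x2] x3] Hx. rewrite twisted_trace_combination in Hx.
      rewrite (H0_omega_twisted_trace_eq theta phi Hphi) in Hx.
      assert (E := twisted_trace_inj theta _ _ Hx).
      rewrite (E 0%Z), (E 1%Z), (E 2%Z) by lia.
      unfold residue_indicator; simpl. f_equal; [f_equal|]; ring.
  - intros [c [Hc _]]. rewrite Hc, twisted_trace_combination.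
    split; [apply H0_omega_twisted_trace | apply Z3_invariant_twisted_trace].
Qed.
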